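(* There exists no simple, locally finite lattice $S$ with more than two elements such that every finite sublattice of $S$ satisfies $(\mathrm{T}_\vee)$.
   Context: A lattice is simple if its only congruences are the identity and the total congruence. It is locally finite if every finitely generated sublattice is finite. For a finite lattice $A$, let $\mathrm{J}(A)$ be its set of join-irreducible elements; for $q\in\mathrm{J}(A)$ let $q_*$ be its unique lower cover. The join-dependency relation $D_A$ on $\mathrm{J}(A)$ is defined by: $p\,D_A\,q$ iff $p\neq q$ and there exists $x\in A$ with $p\leq q\vee x$ and $p\nleq q_*\vee x$. A finite lattice $A$ satisfies $(\mathrm{T}_\vee)$ if $D_A$ has no cycle. *)

From HB Require Import structures.
From mathcomp Require Import all_boot all_order.
Set Implicit Arguments. Unset Strict Implicit. Unset Printing Implicit Defensive.
Import Order.Theory.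
Local Open Scope order_scope.

Section LatticeDefs.
Context {disp : Order.disp_t} {T : latticeType disp}.

Definition lattice_congruence (th : T -> T -> Prop) : Prop :=
  (forall x, th x x) /\ (forall x y, th x y -> th y x) /\
  (forall x y z, th x y -> th y z -> th x z) /\
  (forall x y x' y', th x x' -> th y y' -> th (x `&` y) (x' `&` y')) /\
  (forall x y x' y', th x x' -> th y y' -> th (x `|` y) (x' `|` y')).

Definition simple_lattice : Prop :=
  forall th, lattice_congruence th ->
    (forall x y, th x y <-> x = y) \/ (forall x y, th x y).

Inductive gen_sublattice (X : seq T) : T -> Prop :=
| gen_base x : x \in X -> gen_sublattice X x
| gen_meet x y : gen_sublattice X x -> gen_sublattice X y -> gen_sublattice X (x `&` y)
| gen_join x y : gen_sublattice X x -> gen_sublattice X y -> gen_sublattice X (x `|` y).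

Definition finite_set (P : T -> Prop) : Prop :=
  exists s : seq T, forall x, P x -> x \in s.

Definition locally_finite : Prop :=
  forall X : seq T, finite_set (gen_sublattice X).

Definition is_sublattice (A : seq T) : Prop :=
  A <> [::] /\
  (forall x y, x \in A -> y \in A -> x `&` y \in A) /\
  (forall x y, x \in A -> y \in A -> x `|` y \in A).

Definition join_irr (A : seq T) (q : T) : Prop :=
  q \in A /\ (exists a, a \in A /\ ~ (q <= a)) /\
  (forall x y, x \in A -> y \in A -> q = x `|` y -> q = x \/ q = y).

Definition lower_cover (A : seq T) (q c : T) : Prop :=
  c \in A /\ c < q /\ (forall z, z \in A -> c < z -> ~ (z < q)).

Definition join_dep (A : seq T) (p q : T) : Prop :=
  join_irr A p /\ join_irr A q /\ p <> q /\
  exists qs, lower_cover A q qs /\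
    exists x, x \in A /\ p <= q `|` x /\ ~ (p <= qs `|` x).

Definition has_cycle (R : T -> T -> Prop) : Prop :=
  exists (n : nat) (f : nat -> T),
    (0 < n)%N /\ (forall i, (i < n)%N -> R (f i) (f i.+1)) /\ f n = f 0%N.

Definition satisfies_Tjoin (A : seq T) : Prop := ~ has_cycle (join_dep A).

Definition more_than_two : Prop :=
  exists a b c : T, a <> b /\ a <> c /\ b <> c.

End LatticeDefs.

From HB Require Import structures.
From mathcomp Require Import all_boot all_order zify.
From Stdlib Require Import Classical.
Set Implicit Arguments. Unset Strict Implicit. Unset Printing Implicit Defensive.
Import Order.Theory.
Local Open Scope order_scope.

(* In a finite lattice A whose join-dependency relation D_A is acyclic, any
   chain u < v < w of A admits a congruence of A collapsing exactly one of the
   pairs (u, v), (v, w): if K is a D_A-closed set of join-irreducibles, having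
   the same elements of K below is a congruence, and K can be chosen to contain
   exactly one join-irreducible separating one of the two pairs. In a simple
   lattice, however, the congruence generated by (v, w) contains (u, v) and
   conversely; local finiteness puts witnesses of both facts in a single finite
   sublattice, where the separating congruence contradicts them. *)

Section SimpleLatticeTjoin.
Context {disp : Order.disp_t} {T : latticeType disp}.
Implicit Types (A X s : seq T) (a b c p q r t u v w x y z : T).

Lemma exists_minimal (R : T -> T -> Prop) (P : T -> Prop) s :
  (forall a b c, R a b -> R b c -> R a c) -> (forall a, ~ R a a) ->
  (exists x, x \in s /\ P x) ->
  exists m, [/\ m \in s, P m & forall y, y \in s -> P y -> ~ R y m].
Proof.
move=> Rtrans Rirr; elim: s => [|a s IH] [x [xs Px]]; first by rewrite in_nil in xs.
case: (classic (exists x, x \in s /\ P x)) => [/IH [m [ms Pm mmin]]|nos].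
- case: (classic (P a /\ R a m)) => [[Pa Ram]|nam].
  + exists a; split => //; first exact: mem_head.
    move=> y; rewrite inE => /orP [/eqP -> _|ys Py Rya]; first exact: Rirr.
    exact: mmin y ys Py (Rtrans _ _ _ Rya Ram).
  + exists m; split => //; first by rewrite inE ms orbT.
    by move=> y; rewrite inE => /orP [/eqP -> Pa Ram|]; [apply: nam | exact: mmin].
- exists a; move: xs; rewrite inE => /orP [/eqP xa|xs]; last by case: nos; exists x.
  split; [exact: mem_head | by rewrite -xa |].
  move=> y; rewrite inE => /orP [/eqP -> _|ys Py]; first exact: Rirr.
  by case: nos; exists y.
Qed.

Lemma exists_lt_minimal (P : T -> Prop) s : (exists x, x \in s /\ P x) ->
  exists m, [/\ m \in s, P m & forall y, y \in s -> P y -> ~ y < m].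
Proof. by apply: exists_minimal => [a b c|a]; [exact: lt_trans | rewrite ltxx]. Qed.

Lemma exists_lt_maximal (P : T -> Prop) s : (exists x, x \in s /\ P x) ->
  exists m, [/\ m \in s, P m & forall y, y \in s -> P y -> ~ m < y].
Proof.
apply: (@exists_minimal (fun a b => b < a)) => [a b c ba cb|a].
  exact: lt_trans cb ba.
by rewrite ltxx.
Qed.

Definition separates a b q := q <= b /\ ~ q <= a.

Definition walk (R : T -> T -> Prop) n p q := exists f : nat -> T,
  [/\ f 0%N = p, f n = q & forall i, (i < n)%N -> R (f i) (f i.+1)].

Lemma walk0 (R : T -> T -> Prop) p : walk R 0 p p.
Proof. by exists (fun=> p). Qed.

Lemma walk_cat (R : T -> T -> Prop) n m p q r :
  walk R n p q -> walk R m q r -> walk R (n + m) p r.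
Proof.
move=> [f [f0 fn fR]] [g [g0 gm gR]].
exists (fun i => if (i <= n)%N then f i else g (i - n)%N); split.
- by rewrite leq0n.
- case: ifP => [le_nmn|_]; last by rewrite addKn.
  have m0 : m = 0%N by lia.
  by rewrite m0 addn0 fn -gm m0 g0.
- move=> i lti /=; case: (ltngtP i n) => [lt_in|lt_ni|eq_in].
  + exact: fR.
  + have -> : (i.+1 - n = (i - n).+1)%N by lia.
    apply: gR; lia.
  + by subst i; rewrite subSnn fn -g0; apply: gR; lia.
Qed.

Lemma walk_snoc (R : T -> T -> Prop) n p q r :
  walk R n p q -> R q r -> walk R n.+1 p r.
Proof.
move=> pq qr; rewrite -addn1; apply: walk_cat pq _.
by exists (fun i => if i is 0%N then q else r); split => // [[|i]].
Qed.

Lemma exists_walk_maximal (R : T -> T -> Prop) (P : T -> Prop) s :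
  ~ has_cycle R -> (exists x, x \in s /\ P x) ->
  exists m, [/\ m \in s, P m & forall n y, y \in s -> P y -> ~ walk R n.+1 m y].
Proof.
move=> acyclic sP.
pose reach a b := exists n, walk R n.+1 a b.
have reach_trans a b c : reach a b -> reach b c -> reach a c.
  by case=> n ab [k bc]; exists (n + k.+1)%N; exact: walk_cat ab bc.
have reach_irr a : ~ reach a a.
  case=> n [f [f0 fn fR]]; apply: acyclic.
  by exists n.+1, f; split => //; rewrite fn f0.
have [m [ms Pm mmax]] := @exists_minimal (fun a b => reach b a) P s
  (fun a b c ba cb => reach_trans c b a cb ba) reach_irr sP.
by exists m; split => // n y ys Py my; apply: (mmax y ys Py); exists n.
Qed.

Record congruence_on A (th : T -> T -> Prop) : Prop := {
  cong_refl : forall x, x \in A -> th x x;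
  cong_sym : forall x y, x \in A -> y \in A -> th x y -> th y x;
  cong_trans : forall x y z, x \in A -> y \in A -> z \in A ->
    th x y -> th y z -> th x z;
  cong_meet : forall x y x' y', x \in A -> y \in A -> x' \in A -> y' \in A ->
    th x x' -> th y y' -> th (x `&` y) (x' `&` y');
  cong_join : forall x y x' y', x \in A -> y \in A -> x' \in A -> y' \in A ->
    th x x' -> th y y' -> th (x `|` y) (x' `|` y') }.

Section FiniteSublattice.
Variable A : seq T.
Hypothesis sublA : is_sublattice A.

Lemma join_irr_separates a b : a \in A -> b \in A -> ~ a <= b ->
  exists q, [/\ q \in A, q <= a, ~ q <= b, join_irr A q &
    forall t, t \in A -> t < q -> t <= b].
Proof.
move=> aA bA nab.
have [q [qA [qa nqb] qmin]] := exists_lt_minimal (P := fun q => q <= a /\ ~ q <= b)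
  (ex_intro _ a (conj aA (conj (lexx a) nab))).
have below_q t : t \in A -> t < q -> t <= b.
  move=> tA tq; apply: NNPP => ntb.
  by apply: (qmin t tA _ tq); split => //; exact: le_trans (ltW tq) qa.
exists q; split => //; split => //; split; first by exists b.
move=> s t sA tA qst; case: (eqVneq q s) => [|nqs]; first by left.
case: (eqVneq q t) => [|nqt]; first by right.
case: nqb; rewrite qst leUx !below_q //.
- by rewrite lt_def nqt qst leUr.
- by rewrite lt_def nqs qst leUl.
Qed.

Lemma exists_lower_cover a q : a \in A -> q \in A -> a < q ->
  exists2 r, lower_cover A q r & a <= r.
Proof.
move=> aA qA aq.
have [r [rA [ar rq] rmax]] := exists_lt_maximal (P := fun t => a <= t /\ t < q)
  (ex_intro _ a (conj aA (conj (lexx a) aq))).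
exists r => //; split => //; split => // t tA rt tq.
by apply: (rmax t tA _ rt); split => //; exact: le_trans ar (ltW rt).
Qed.

(* The witness [x] in [join_dep A p q] is [z0 `|` y]. *)
Lemma lower_cover_join_dep p y z z0 : join_irr A p -> y \in A -> z \in A ->
  lower_cover A z z0 -> p <= z `|` y -> ~ p <= z0 `|` y ->
  exists q, [/\ q <= z, ~ q <= z0 & p = q \/ join_dep A p q].
Proof.
move=> Jp yA zA [z0A [z0z z0cov]] pzy npz0y; have [_ [A_meet A_join]] := sublA.
have [q [qA qz nqz0 Jq below_q]] := join_irr_separates zA z0A (negP (negbT (lt_geF z0z))).
exists q; split => //.
have qz0 : q `|` z0 = z.
  have : q `|` z0 <= z by rewrite leUx qz ltW.
  rewrite le_eqVlt => /orP [/eqP //|qz0z]; case: (z0cov _ (A_join _ _ qA z0A) _ qz0z).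
  by rewrite lt_def leUr andbT; apply: contra_notN nqz0 => /eqP <-; exact: leUl.
have qz0_q : q `&` z0 < q.
  by rewrite lt_def leIl andbT; apply: contra_notN nqz0 => /eqP ->; exact: leIr.
have [r qr _] := exists_lower_cover (A_meet _ _ qA z0A) qA qz0_q.
have rz0 : r <= z0 by case: qr => rA [rq _]; exact: below_q.
case: (eqVneq p q) => [|npq]; [by left | right].
split => //; split => //; split; first exact/eqP.
exists r; split => //; exists (z0 `|` y); split; first exact: A_join.
split; first by rewrite joinA qz0.
by apply: contra_not npz0y => /le_trans; apply; rewrite leUx lexx (le_trans rz0) ?leUl.
Qed.

Section Kernel.
Variable K : T -> Prop.
Hypothesis KJ : forall q, K q -> join_irr A q.
Hypothesis K_closed : forall p q, K p -> join_dep A p q -> K q.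

Definition same_below x y := forall q, K q -> (q <= x <-> q <= y).

Lemma same_below_sym x y : same_below x y -> same_below y x.
Proof. by move=> h q Kq; split => /(h q Kq). Qed.

Lemma same_below_meetr x x' : same_below x x' -> same_below x (x `&` x').
Proof.
move=> h q Kq; rewrite lexI; split => [qx|/andP [] //].
by rewrite qx; exact: (h q Kq).1.
Qed.

(* Take [z] minimal between [x'] and [x] with [p <= z `|` y]; if [z <> x'],
   a lower cover of [z] above [x'] yields a join-irreducible of [K] below [x]
   but not below [x']. *)
Lemma same_below_join_le x x' y p : x \in A -> x' \in A -> y \in A ->
  x' <= x -> same_below x x' -> K p -> p <= x `|` y -> p <= x' `|` y.
Proof.
move=> xA x'A yA x'x xx' Kp pxy.
have [z [zA [x'z zx pzy] zmin]] :=
  exists_lt_minimal (P := fun z => [/\ x' <= z, z <= x & p <= z `|` y])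
  (ex_intro _ x (conj xA (And3 x'x (lexx x) pxy))).
case: (eqVneq z x') => [<- //|nzx'].
have x'z' : x' < z by rewrite lt_def nzx'.
have [z0 z0cov x'z0] := exists_lower_cover x'A zA x'z'.
have npz0y : ~ p <= z0 `|` y.
  case: z0cov => z0A [z0z _] pz0y; apply: (zmin z0 z0A _ z0z).
  by split => //; exact: le_trans (ltW z0z) zx.
have [q [qz nqz0 pq]] := lower_cover_join_dep (KJ Kp) yA zA z0cov pzy npz0y.
have Kq : K q by case: pq => [<- //|]; exact: K_closed.
case: nqz0; apply: le_trans x'z0; apply/(xx' q Kq); exact: le_trans qz zx.
Qed.

Lemma same_below_join x y x' y' p : x \in A -> y \in A -> x' \in A -> y' \in A ->
  same_below x x' -> same_below y y' -> K p -> p <= x `|` y -> p <= x' `|` y'.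
Proof.
move=> xA yA x'A y'A xx' yy' Kp pxy; have [_ [A_meet _]] := sublA.
have pxy' : p <= x' `|` y.
  apply: le_trans _ (leU2 (leIr _ _) (lexx y)).
  exact: same_below_join_le (A_meet _ _ xA x'A) yA (leIl _ _) (same_below_meetr xx') Kp pxy.
rewrite joinC in pxy'; rewrite joinC.
apply: le_trans _ (leU2 (leIr _ _) (lexx x')).
exact: same_below_join_le (A_meet _ _ yA y'A) x'A (leIl _ _) (same_below_meetr yy') Kp pxy'.
Qed.

Lemma same_below_congruence : congruence_on A same_below.
Proof.
split.
- by move=> x _ q _.
- by move=> x y _ _; exact: same_below_sym.
- by move=> x y z _ _ _ xy yz q Kq; split => [/(xy q Kq)/(yz q Kq)|/(yz q Kq)/(xy q Kq)].
- move=> x y x' y' _ _ _ _ xx' yy' q Kq; rewrite !lexI.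
  by split => /andP [qx qy]; apply/andP; split; first [exact/(xx' q Kq) | exact/(yy' q Kq)].
- move=> x y x' y' xA yA x'A y'A xx' yy' q Kq; split; first exact: same_below_join.
  exact: same_below_join (same_below_sym xx') (same_below_sym yy') Kq.
Qed.

Lemma same_below_separates a b : a <= b ->
  same_below a b <-> forall q, K q -> ~ separates a b q.
Proof.
move=> ab; split=> [h q Kq [qb]|h q Kq]; first by apply; exact/(h q Kq).
split=> [qa|qb]; first exact: le_trans qa ab.
by apply: NNPP => nqa; exact: h q Kq (conj qb nqa).
Qed.

End Kernel.

(* [p0] is maximal for the transitive closure of [D_A] among the
   join-irreducibles separating [u < v] or [v < w], hence the only such element
   in its own [D_A]-closure [K]. *)
Lemma separating_congruence u v w : satisfies_Tjoin A ->
  u \in A -> v \in A -> w \in A -> u < v -> v < w ->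
  exists phi, congruence_on A phi /\ (phi u v <-> ~ phi v w).
Proof.
move=> acyclic uA vA wA uv vw.
pose P q := join_irr A q /\ (separates u v q \/ separates v w q).
have [q0 [q0A q0v nq0u Jq0 _]] := join_irr_separates vA uA (negP (negbT (lt_geF uv))).
have [p0 [p0A Pp0 p0max]] := exists_walk_maximal acyclic
  (ex_intro _ q0 (conj q0A (conj Jq0 (or_introl (conj q0v nq0u)))) : exists x, x \in A /\ P x).
pose K q := exists n, walk (join_dep A) n p0 q.
have KJ q : K q -> join_irr A q.
  case=> [[|n] [f [f0 fn fD]]]; first by rewrite -fn f0; case: Pp0.
  by case: (fD n (ltnSn n)); rewrite fn => _ [].
have K_closed p q : K p -> join_dep A p q -> K q.
  by case=> n p0p Dpq; exists n.+1; exact: walk_snoc p0p Dpq.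
have K_only_p0 q : K q -> P q -> q = p0.
  case=> [[|n] p0q] Pq; first by case: p0q => f [f0 fn _]; rewrite -fn f0.
  by case: (p0max n q _ Pq p0q); case: Pq => [[]].
have sameE a b : a <= b -> (forall q, join_irr A q -> separates a b q -> P q) ->
    (same_below K a b <-> ~ separates a b p0).
  move=> ab abP; rewrite same_below_separates //.
  split=> [h|np0 q Kq sq]; first by apply: h; exists 0%N; exact: walk0.
  by apply: np0; rewrite -(K_only_p0 q Kq (abP q (KJ q Kq) sq)).
exists (same_below K); split; first exact: same_below_congruence.
rewrite (sameE u v (ltW uv)) ?(sameE v w (ltW vw)); last 2 first.
- by move=> q Jq sq; split => //; right.
- by move=> q Jq sq; split => //; left.
by case: Pp0 => _ [[p0v np0u]|[p0w np0v]]; rewrite /separates; tauto.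
Qed.

End FiniteSublattice.

Lemma finite_set_enum (P : T -> Prop) : finite_set P ->
  exists s, forall x, x \in s <-> P x.
Proof.
move=> [s sP].
have [l lE] : exists l : seq T, forall x, x \in l <-> x \in s /\ P x.
  elim: (s) => [|a s' [l lE]]; first by exists [::] => x; rewrite in_nil; split => [|[]].
  case: (classic (P a)) => Pa; [exists (a :: l) | exists l] => x; rewrite !inE;
    case: eqVneq => [->|_] /=; have := lE a; have := lE x; tauto.
by exists l => x; have := lE x; have := sP x; tauto.
Qed.

Lemma sublattice_containing x X : locally_finite (T:=T) ->
  exists A, is_sublattice A /\ all (mem A) (x :: X).
Proof.
move=> lf; have [A AE] := finite_set_enum (lf (x :: X)).
exists A; split; last by apply/allP => y yX; apply/AE; exact: gen_base.
split; first by move=> A0; have := (AE x).2 (gen_base (mem_head x X)); rewrite A0.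
by split => a b /AE ga /AE gb; apply/AE; [exact: gen_meet | exact: gen_join].
Qed.

(* A stand-in for the principal congruence con(a, b) that only involves
   congruences of finite sublattices, where (T_join) applies; it is still a
   congruence of [T] containing (a, b). *)
Definition cong_gen a b x y : Prop := exists X, forall A, is_sublattice A ->
  all (mem A) [:: x, y & X] -> forall phi, congruence_on A phi -> phi a b -> phi x y.

Lemma cong_gen_congruence a b : lattice_congruence (cong_gen a b).
Proof.
split; [|split; [|split; [|split]]].
- move=> x; exists [::] => A _ /= /and3P [xA _ _] phi cphi _.
  exact: (cong_refl cphi xA).
- move=> x y [X xy]; exists X => A sA /= /and3P [yA xA XA] phi cphi ab.
  by apply: (cong_sym cphi xA yA); apply: xy sA _ phi cphi ab; rewrite /= xA yA.
- move=> x y z [X1 xy] [X2 yz]; exists (y :: X1 ++ X2) => A sA.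
  rewrite /= all_cat => /and5P [xA zA yA X1A X2A] phi cphi ab.
  apply: (cong_trans cphi xA yA zA).
    by apply: xy sA _ phi cphi ab; rewrite /= xA yA.
  by apply: yz sA _ phi cphi ab; rewrite /= yA zA.
- move=> x y x' y' [X1 xx'] [X2 yy']; exists [:: x, y, x', y' & X1 ++ X2] => A sA.
  rewrite /= all_cat => /and3P [_ _ /and5P [xA yA x'A y'A /andP [X1A X2A]]] phi cphi ab.
  apply: (cong_meet cphi xA yA x'A y'A).
    by apply: xx' sA _ phi cphi ab; rewrite /= xA x'A.
  by apply: yy' sA _ phi cphi ab; rewrite /= yA y'A.
- move=> x y x' y' [X1 xx'] [X2 yy']; exists [:: x, y, x', y' & X1 ++ X2] => A sA.
  rewrite /= all_cat => /and3P [_ _ /and5P [xA yA x'A y'A /andP [X1A X2A]]] phi cphi ab.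
  apply: (cong_join cphi xA yA x'A y'A).
    by apply: xx' sA _ phi cphi ab; rewrite /= xA x'A.
  by apply: yy' sA _ phi cphi ab; rewrite /= yA y'A.
Qed.

Lemma simple_cong_gen a b x y : simple_lattice (T:=T) -> a != b -> cong_gen a b x y.
Proof.
move=> simpleT /eqP nab.
have [cg_eq|] := simpleT _ (cong_gen_congruence a b); last by apply.
by case: nab; apply/cg_eq; exists [::] => A _ _ phi _.
Qed.

Lemma incomparable_lt_chain x y : x >< y -> x `&` y < x /\ x < x `|` y.
Proof.
move=> xy; rewrite !lt_def leIl leUl !andbT; split.
  by apply: contraNneq xy => ->; rewrite /Order.comparable leIr.
by apply: contraNneq xy => <-; rewrite /Order.comparable leUr orbT.
Qed.

Lemma more_than_two_lt_chain : more_than_two (T:=T) -> exists u v w, u < v /\ v < w.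
Proof.
move=> [a [b [c [nab [nac nbc]]]]].
have incomp x y : x >< y -> exists u v w, u < v /\ v < w.
  by move=> /incomparable_lt_chain [lt1 lt2]; exists (x `&` y), x, (x `|` y).
wlog ab : a b nab nac nbc / a < b.
  move=> chain; case: (comparableP a b) => [ab|ba|/incomp //|/nab []].
    exact: chain ab.
  by apply: (chain b a) => // /esym.
case: (comparableP a c) => [ac|ca|/incomp //|/nac []]; last by exists c, a, b.
case: (comparableP b c) => [bc|cb|/incomp //|/nbc []]; first by exists a, b, c.
by exists a, c, b.
Qed.

End SimpleLatticeTjoin.

Theorem theorem6p1 :
  forall (disp : Order.disp_t) (S : latticeType disp),
    ~ (@simple_lattice disp S /\ @locally_finite disp S /\ @more_than_two disp S /\
       forall A : seq S, is_sublattice A -> satisfies_Tjoin A).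
Proof.
move=> disp S [simpleS [lfS [three Tjoin]]].
have [u [v [w [uv vw]]]] := more_than_two_lt_chain three.
have [X1 vw_uv] := simple_cong_gen u v simpleS (negbT (lt_eqF vw)).
have [X2 uv_vw] := simple_cong_gen v w simpleS (negbT (lt_eqF uv)).
have [A [sA]] := sublattice_containing u [:: v, w & X1 ++ X2] lfS.
rewrite /= all_cat => /and5P [uA vA wA X1A X2A].
have [phi [cphi sep]] := separating_congruence sA (Tjoin A sA) uA vA wA uv vw.
have : phi u v <-> phi v w.
  split => [phi_uv|phi_vw].
    by apply: (uv_vw A sA _ phi cphi phi_uv); rewrite /= vA wA.
  by apply: (vw_uv A sA _ phi cphi phi_vw); rewrite /= uA vA.
tauto.
Qed.
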